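(* For every integer $n \geq -1$, $q_n(x) = 2^{n+1} F_{n+1}(x, 1/2)$. Equivalently, as formal power series in $t$, \[ \sum_{n=0}^\infty q_{n-1}(x) \frac{t^n}{n!} = \mathscr{F}(x,1/2;2t) = \left(\frac{1-x}{e^{2t(x-1)}-x}\right)^{1/2}. \]
   Context: Define polynomial sequences $(p_k(x))_{k\ge -1}$ and $(q_k(x))_{k\ge -1}$ by $p_{-1}(x)=0$, $q_{-1}(x)=1$ and, for $k\ge -1$, $p_{k+1}(x) = 2(kx+1)p_k(x) + 2x(1-x)p_k'(x) + q_k(x)$, $q_{k+1}(x) = (2(k+1)x+1)q_k(x) + 2x(1-x)q_k'(x)$. For a permutation $\pi=\pi_1\cdots\pi_n$ of $[n]=\{1,\dots,n\}$, let $\mathrm{exc}(\pi)=|\{i\in[n]:\pi_i>i\}|$ and $\mathrm{cyc}(\pi)$ the number of cycles in its disjoint cycle decomposition. The bivariate Eulerian polynomials are $F_0(x,y)=1$ and $F_n(x,y)=\sum_{\pi\in\mathfrak S_n} x^{\mathrm{exc}(\pi)}y^{\mathrm{cyc}(\pi)}$ for $n>0$, where $\mathfrak S_n$ is the symmetric group on $[n]$; their exponential generating function is $\mathscr{F}(x,y;t)=\sum_{n\ge0}F_n(x,y)t^n/n! = \left(\frac{1-x}{e^{t(x-1)}-x}\right)^y$. *)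

From mathcomp Require Import all_boot all_order all_algebra all_fingroup.
Set Implicit Arguments. Unset Strict Implicit. Unset Printing Implicit Defensive.
Import GRing.Theory.
Local Open Scope ring_scope.

(* Index shift: qseq m = q_{m-1}(x), so qseq 0 = q_{-1} = 1 and, for k = m-1,
   q_{k+1} = (2(k+1)x + 1) q_k + 2x(1-x) q_k'. Polynomials over rat. *)
Fixpoint qseq (m : nat) : {poly rat} :=
  match m with
  | 0 => 1
  | m'.+1 => (2 * m'%:R *: 'X + 1) * qseq m'
             + (2%:P * 'X * (1 - 'X)) * (qseq m')^`()
  end.

(* companion sequence pseq m = p_{m-1}(x); p_{-1} = 0 (not used by the theorem) *)
Fixpoint pseq (m : nat) : {poly rat} :=
  match m with
  | 0 => 0
  | m'.+1 => (2%:P * ((m'%:R - 1) *: 'X + 1)) * pseq m'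
             + (2%:P * 'X * (1 - 'X)) * (pseq m')^`() + qseq m'
  end.

(* excedances of a permutation of 'I_n (0-based, same as 1-based count) *)
Definition exc n (s : 'S_n) : nat := #|[set i : 'I_n | (i < s i)%N]|.
Definition cyc n (s : 'S_n) : nat := #|porbits s|.

Definition Fxy (n : nat) (y : rat) : {poly rat} :=
  if n == 0%N then 1
  else \sum_(s : 'S_n) y ^+ cyc s *: 'X^(exc s).

From mathcomp Require Import all_boot all_order all_algebra all_fingroup ring.
Set Implicit Arguments. Unset Strict Implicit. Unset Printing Implicit Defensive.
Import GRing.Theory.

(* Inserting n+1 into a permutation s of [n], either as a new fixed point or
   right after some i in its cycle, yields every permutation of [n+1] exactly
   once.  A new fixed point multiplies the weight y^cyc x^exc by y; insertion
   after i keeps the number of cycles and raises exc by one exactly when i is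
   not an excedance of s.  Summing gives
   F_{n+1} = (y + n x) F_n + x (1 - x) F_n',
   which at y = 1/2, scaled by 2^{n+1}, is the recurrence defining q_n. *)

Lemma porbit_fixed (T : finType) (v : {perm T}) x : v x = x -> porbit v x = [set x].
Proof.
move=> vx; have vXx k : (v ^+ k)%g x = x.
  by elim: k => [|k IHk]; rewrite ?expg0 ?perm1 // expgSr permM IHk.
apply/setP=> z; rewrite inE; apply/porbitP/eqP => [[k ->]|->]; first exact: vXx.
by exists 0; rewrite expg0 perm1.
Qed.

Section CyclesOfLiftedPermutations.
Local Open Scope group_scope.
Variables (n : nat) (i0 : 'I_n.+1) (s : 'S_n).
Local Notation u := (lift_perm i0 i0 s).

Lemma lift_permX k m : (u ^+ k) (lift i0 m) = lift i0 ((s ^+ k) m).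
Proof.
elim: k => [|k IHk]; first by rewrite !expg0 !perm1.
by rewrite !expgSr !permM IHk lift_perm_lift.
Qed.

Lemma porbit_lift_perm m : porbit u (lift i0 m) = lift i0 @: porbit s m.
Proof.
apply/setP=> x; apply/porbitP/imsetP => [[k ->]|[z /porbitP[k ->] ->]].
  by exists ((s ^+ k) m); [apply/porbitP; exists k | rewrite lift_permX].
by exists k; rewrite lift_permX.
Qed.

Lemma porbits_lift_perm :
  porbits u = [set i0] |: ((fun X : {set 'I_n} => lift i0 @: X) @: porbits s).
Proof.
apply/setP=> X; rewrite !inE; apply/imsetP/idP => [[x _ ->]|].
  case: (unliftP i0 x) => [m|] ->; last by rewrite porbit_fixed ?lift_perm_id ?eqxx.
  by rewrite porbit_lift_perm !imset_f ?orbT.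
case/orP=> [/eqP ->|/imsetP[_ /imsetP[m _ ->] ->]].
  by exists i0; rewrite // porbit_fixed ?lift_perm_id.
by exists (lift i0 m); rewrite ?porbit_lift_perm.
Qed.

Lemma cyc_lift_perm : cyc u = (cyc s).+1.
Proof.
rewrite /cyc porbits_lift_perm cardsU1 card_imset; last exact/imset_inj/lift_inj.
suff -> : [set i0] \notin (fun X : {set 'I_n} => lift i0 @: X) @: porbits s by [].
apply/imsetP => -[_ /imsetP[m _ ->] /setP /(_ i0)].
by rewrite inE eqxx => /esym /imsetP[k _ /eqP]; rewrite (negbTE (neq_lift _ _)).
Qed.

End CyclesOfLiftedPermutations.

Lemma cyc_mul_tperm n (u : 'S_n) (x y : 'I_n) :
  u x = x -> y != x -> (cyc (u * tperm x y)%g).+1 = cyc u.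
Proof.
move=> ux yx; rewrite /cyc -porbitsV invMg tpermV.
have := porbits_mul_tperm u^-1 x y.
rewrite porbitV porbit_sym porbit_fixed // inE yx eq_sym yx porbitsV /=.
by rewrite addn2 addn1 => -[].
Qed.

Lemma excE n (s : 'S_n) : exc s = (\sum_(i < n) (i < s i))%N.
Proof.
rewrite /exc -sum1_card big_mkcond /=; apply: eq_bigr => i _.
by rewrite inE; case: (_ < _)%N.
Qed.

Lemma exc_le n (s : 'S_n) : (exc s <= n)%N.
Proof. by rewrite /exc (leq_trans (max_card _)) ?card_ord. Qed.

Lemma card_exc n (s : 'S_n) : #|[pred i : 'I_n | (i < s i)%N]| = exc s.
Proof. by rewrite /exc cardsE. Qed.

Lemma card_nonexc n (s : 'S_n) : #|[pred i : 'I_n | ~~ (i < s i)%N]| = n - exc s.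
Proof.
have := cardC [pred i : 'I_n | (i < s i)%N].
rewrite card_exc card_ord => /(congr1 (subn^~ (exc s))).
by rewrite addKn.
Qed.

Lemma cyc_le n (s : 'S_n) : (cyc s <= n)%N.
Proof. by rewrite /cyc (leq_trans (leq_imset_card _ _)) ?card_ord. Qed.

Lemma lift_max_widen n (k : 'I_n) : lift ord_max k = widen_ord (leqnSn n) k.
Proof. by apply: ord_inj; rewrite lift_max. Qed.

Section ExcedancesOfLiftedPermutations.
Local Open Scope group_scope.
Variables (n : nat) (s : 'S_n).
Local Notation L := (@ord_max n).
Local Notation u := (lift_perm L L s).

Lemma exc_lift_perm : exc u = exc s.
Proof.
rewrite !excE big_ord_recr /= lift_perm_id ltnn addn0.
by apply: eq_bigr => k _; rewrite -lift_max_widen lift_perm_lift !lift_max.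
Qed.

(* [u * tperm L (lift L (s i))] is [s] with n+1 inserted right after [i]. *)
Lemma exc_lift_perm_tperm i :
  (exc (u * tperm L (lift L (s i))) + (i < s i))%N = (exc s).+1.
Proof.
rewrite !excE big_ord_recr /= permM lift_perm_id tpermL lift_max ltnNge.
rewrite (ltnW (ltn_ord (s i))) addn0 (bigD1 i) //= (bigD1 i (P := predT)) //=.
rewrite -lift_max_widen permM lift_perm_lift tpermR ltn_ord.
rewrite add1n addSn addnC; congr (_ + _).+1; apply: eq_bigr => k /negbTE ki.
rewrite -lift_max_widen permM lift_perm_lift tpermD ?lift_max ?neq_lift //.
by rewrite (inj_eq lift_inj) (inj_eq perm_inj) eq_sym ki.
Qed.

End ExcedancesOfLiftedPermutations.

Local Open Scope ring_scope.

Section InsertionDecomposition.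
Variables (V : nmodType) (n : nat).
Local Notation L := (@ord_max n).

Lemma sum_perm_fixing_max (G : 'S_n.+1 -> V) :
  \sum_(v : 'S_n.+1 | v L == L) G v = \sum_(s : 'S_n) G (lift_perm L L s).
Proof.
rewrite (reindex (lift_perm L L)); last first.
  pose ulsf i (v : 'S_n.+1) k := odflt k (unlift (v i) (v (lift i k))).
  have ulsfK i (v : 'S_n.+1) k : lift (v i) (ulsf i v k) = v (lift i k).
    rewrite /ulsf; have := neq_lift i k.
    by rewrite -(can_eq (permK v)) => /unlift_some[] ? ? ->.
  have inj_ulsf : injective (ulsf L _).
    move=> v; apply: can_inj (ulsf (v L) v^-1%g) _ => k.
    by rewrite {1}/ulsf ulsfK !permK liftK.
  exists (fun v => perm (inj_ulsf v)) => [s _ | v].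
    by apply/permP=> k; rewrite permE /ulsf lift_perm_lift lift_perm_id liftK.
  move/eqP => vL; apply/permP => k.
  case: (unliftP L k) => [k'|] ->; rewrite ?lift_perm_id //.
  by rewrite lift_perm_lift permE; have := ulsfK L v k'; rewrite vL.
by apply: eq_bigl => s; rewrite lift_perm_id eqxx.
Qed.

Lemma sum_perm_insert_max (G : 'S_n.+1 -> V) :
  \sum_(v : 'S_n.+1) G v
    = \sum_(s : 'S_n) \sum_(j : 'I_n.+1) G (lift_perm L L s * tperm L j)%g.
Proof.
rewrite (partition_big (fun v : 'S_n.+1 => v L) predT) //= [RHS]exchange_big /=.
apply: eq_bigr => j _; rewrite (reindex_inj (mulIg (tperm L j))) /=.
rewrite -(sum_perm_fixing_max (fun v => G (v * tperm L j)%g)).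
apply: eq_bigl => v; rewrite permM.
by rewrite -[v L == L](inj_eq (@perm_inj _ (tperm L j))) tpermL.
Qed.

End InsertionDecomposition.

Lemma eulerian_recurrence_Xn (R : comNzRingType) (y : R) (n e : nat) : (e <= n)%N ->
  (y%:P + n%:R *: 'X) * 'X^e + ('X * (1 - 'X)) * ('X^e)^`()
    = y *: 'X^e + 'X^e *+ e + 'X^(e.+1) *+ (n - e).
Proof.
move/subnKC <-; rewrite addKn derivXn -!mul_polyC polyC_natr.
case: e => [|e]; first by rewrite !mulr0n expr0 expr1 add0n; ring.
by rewrite /= !exprS; ring.
Qed.

Definition perm_weight (y : rat) n (s : 'S_n) : {poly rat} := y ^+ cyc s *: 'X^(exc s).

Lemma Fxy_perm_weight n y : Fxy n y = \sum_(s : 'S_n) perm_weight y s.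
Proof.
rewrite /Fxy; case: n => [|n] //=.
rewrite (big_pred1 1%g) => [|s]; last by rewrite !inE permS0 eqxx.
have /eqP c0 : cyc (1 : 'S_0)%g == 0%N by rewrite -leqn0 cyc_le.
have /eqP e0 : exc (1 : 'S_0)%g == 0%N by rewrite -leqn0 exc_le.
by rewrite /perm_weight c0 e0 scale1r.
Qed.

Section InsertionWeight.
Variables (y : rat) (n : nat) (s : 'S_n).
Local Notation L := (@ord_max n).
Local Notation u := (lift_perm L L s).

Lemma perm_weight_lift_perm_tperm (i : 'I_n) :
  perm_weight y (u * tperm L (lift L (s i)))%g
    = y ^+ cyc s *: (if (i < s i)%N then 'X^(exc s) else 'X^((exc s).+1)).
Proof.
have := cyc_mul_tperm (lift_perm_id L L s) (negbT (lift_eqF L (s i))).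
rewrite cyc_lift_perm /perm_weight => -[->].
have := exc_lift_perm_tperm s i.
by case: (i < s i)%N; [rewrite addn1 => -[->] | rewrite addn0 => ->].
Qed.

Lemma sum_perm_weight_insert :
  \sum_(j : 'I_n.+1) perm_weight y (u * tperm L j)%g
    = (y%:P + n%:R *: 'X) * perm_weight y s
      + ('X * (1 - 'X)) * (perm_weight y s)^`().
Proof.
rewrite big_ord_recr /= tperm1 mulg1.
under eq_bigr => k _ do rewrite -lift_max_widen.
rewrite (reindex_inj (@perm_inj _ s)) /=.
under eq_bigr => i _ do rewrite perm_weight_lift_perm_tperm.
rewrite -scaler_sumr big_if /= !sumr_const card_exc card_nonexc.
rewrite /perm_weight cyc_lift_perm exc_lift_perm.
rewrite derivZ -!scalerAr -scalerDr eulerian_recurrence_Xn ?exc_le //.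
rewrite [y ^+ _.+1]exprSr -scalerA -scalerDr.
by congr (_ *: _); rewrite [LHS]addrC addrA.
Qed.

End InsertionWeight.

Lemma FxyS n y :
  Fxy n.+1 y = (y%:P + n%:R *: 'X) * Fxy n y + ('X * (1 - 'X)) * (Fxy n y)^`().
Proof.
rewrite !Fxy_perm_weight sum_perm_insert_max raddf_sum !mulr_sumr -big_split.
by apply: eq_bigr => s _; rewrite sum_perm_weight_insert.
Qed.

Theorem theorem2p4 (m : nat) :
  qseq m = (2 ^+ m : rat) *: Fxy m (1 / 2).
Proof.
elim: m => [|m IHm]; first by rewrite /Fxy /= scale1r.
rewrite /= IHm FxyS derivZ -!scalerAr -scalerDr.
rewrite [in RHS]exprSr -[in RHS]scalerA; congr (_ *: _).
have half_twice : 2 *: (1 / 2 : rat)%:P = 1 by rewrite scale_polyC div1r mulfV.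
rewrite scalerDr !scalerAl scalerDr half_twice scalerA.
by rewrite -!mul_polyC (addrC 1 (_ * 'X)).
Qed.
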